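(* Let $q$ be a set of operations on a set $\Omega$. For all $a,b\in\Omega$: $a\sim_q b$ if and only if for every formula $\phi(x,y)$ of $\mathscr L^-_{\infty\infty}(q)$ with exactly two free variables and every $c\in\Omega$, $\Omega,q\models\phi(a,c)\iff\Omega,q\models\phi(b,c)$.
   Context: A set of operations on $\Omega$ is a set of finitary relations on $\Omega$ and quantifiers on $\Omega$ (subsets of $\mathcal P(\Omega^{k_1})\times\cdots\times\mathcal P(\Omega^{k_l})$, $l,k_i$ finite). $\mathscr L^-_{\infty\infty}(q)$ is the equality-free infinitary logic (arbitrary conjunctions/disjunctions, quantification over arbitrary sequences of variables) with a predicate symbol for each relation in $q$ and a generalized (Lindström) quantifier symbol for each quantifier in $q$, interpreted in $\Omega$. $a\sim_q b$ iff for every formula $\phi(x,\bar y)$ of $\mathscr L^-_{\infty\infty}(q)$ and every tuple $\bar c$ from $\Omega$, $\Omega,q\models\phi(a,\bar c)\iff\Omega,q\models\phi(b,\bar c)$. *)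

(* Equality-free infinitary logic L^-_{oo,oo}(q) with
   generalized (Lindstrom) quantifiers, interpreted in a set Omega. *)
From Stdlib Require Import Arith.


Definition fin (n : nat) : Type := { i : nat | i < n }.

(* A set of operations on Omega: an (indexed) family of finitary relations
   and an (indexed) family of quantifiers.
   A quantifier of type (k_1,...,k_l) is a subset of
   P(Omega^{k_1}) x ... x P(Omega^{k_l}). *)
Record ops (Omega : Type) : Type := Ops {
  rel_idx : Type;
  rel_ar  : rel_idx -> nat;
  rel_int : forall r : rel_idx, (fin (rel_ar r) -> Omega) -> Prop;
  qu_idx  : Type;
  qu_l    : qu_idx -> nat;
  qu_k    : forall Q : qu_idx, fin (qu_l Q) -> nat;
  qu_int  : forall Q : qu_idx,
              (forall j : fin (qu_l Q), (fin (qu_k Q j) -> Omega) -> Prop) -> Prop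
}.
Arguments rel_idx {Omega} q : rename.
Arguments rel_ar {Omega} q r : rename.
Arguments rel_int {Omega} q r _ : rename.
Arguments qu_idx {Omega} q : rename.
Arguments qu_l {Omega} q Q : rename.
Arguments qu_k {Omega} q Q j : rename.
Arguments qu_int {Omega} q Q _ : rename.

Set Implicit Arguments.

(* Formulas with free variables among the type X.  Conjunctions/disjunctions
   are over arbitrary index types, quantification is over arbitrary sequences
   (families indexed by an arbitrary type Y) of new variables. *)
Inductive formula (Omega : Type) (q : ops Omega) : Type -> Type :=
| FRel  : forall X (r : rel_idx q), (fin (rel_ar q r) -> X) -> formula q X
| FNot  : forall X, formula q X -> formula q X
| FAnd  : forall X (I : Type), (I -> formula q X) -> formula q X
| FOr   : forall X (I : Type), (I -> formula q X) -> formula q X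
| FEx   : forall X (Y : Type), formula q (X + Y) -> formula q X
| FAll  : forall X (Y : Type), formula q (X + Y) -> formula q X
| FQu   : forall X (Q : qu_idx q),
            (forall j : fin (qu_l q Q), formula q (X + fin (qu_k q Q j))) ->
            formula q X.

Definition ext {X Y Omega : Type} (e : X -> Omega) (c : Y -> Omega)
  : X + Y -> Omega :=
  fun z => match z with inl x => e x | inr y => c y end.

Fixpoint sat (Omega : Type) (q : ops Omega) (X : Type) (phi : formula q X)
  : (X -> Omega) -> Prop :=
  match phi in formula _ X0 return (X0 -> Omega) -> Prop with
  | @FRel _ _ _ r v => fun e => rel_int q r (fun j => e (v j))
  | @FNot _ _ _ psi => fun e => ~ sat psi e
  | @FAnd _ _ _ _ f => fun e => forall i, sat (f i) e
  | @FOr _ _ _ _ f => fun e => exists i, sat (f i) e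
  | @FEx _ _ _ Y psi => fun e => exists c : Y -> Omega, sat psi (ext e c)
  | @FAll _ _ _ Y psi => fun e => forall c : Y -> Omega, sat psi (ext e c)
  | @FQu _ _ _ Q phis => fun e =>
      qu_int q Q (fun j t => sat (phis j) (ext e t))
  end.

Fixpoint free (Omega : Type) (q : ops Omega) (X : Type) (phi : formula q X)
  : X -> Prop :=
  match phi in formula _ X0 return X0 -> Prop with
  | @FRel _ _ _ r v => fun x => exists j, v j = x
  | @FNot _ _ _ psi => fun x => free psi x
  | @FAnd _ _ _ _ f => fun x => exists i, free (f i) x
  | @FOr _ _ _ _ f => fun x => exists i, free (f i) x
  | @FEx _ _ _ _ psi => fun x => free psi (inl x)
  | @FAll _ _ _ _ psi => fun x => free psi (inl x)
  | @FQu _ _ _ Q phis => fun x => exists j, free (phis j) (inl x)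
  end.

Definition simq (Omega : Type) (q : ops Omega) (a b : Omega) : Prop :=
  forall (Y : Type) (phi : formula q (unit + Y)) (c : Y -> Omega),
    sat phi (ext (fun _ : unit => a) c) <-> sat phi (ext (fun _ : unit => b) c).

From Stdlib Require Import Classical FunctionalExtensionality PropExtensionality.

(* The forward direction is the instance Y := unit of the
   definition of a ~_q b.  Conversely, let phi(x, ybar) be any formula and
   cbar a tuple.  If x is not free in phi, the truth value of phi does not
   depend on x (coincidence lemma).  Otherwise consider the formula
       indisc phi (x, x')  :=  forall ybar, (phi(x, ybar) <-> phi(x', ybar)),
   in which both x and x' occur free.  It holds at (b, b), hence by
   hypothesis at (a, b), and instantiating ybar := cbar gives
   phi(a, cbar) <-> phi(b, cbar). *)

Section Syntax.
Context {Omega : Type} {q : ops Omega}.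

Definition map_inl {X X' Y : Type} (h : X -> X') : X + Y -> X' + Y :=
  fun z => match z with inl x => inl (h x) | inr y => inr y end.

Fixpoint rename {X} (phi : formula q X) {struct phi}
  : forall X', (X -> X') -> formula q X' :=
  match phi in formula _ X0 return forall X', (X0 -> X') -> formula q X' with
  | @FRel _ _ _ r v => fun X' h => @FRel _ q X' r (fun j => h (v j))
  | @FNot _ _ _ psi => fun X' h => @FNot _ q X' (rename psi _ h)
  | @FAnd _ _ _ J f => fun X' h => @FAnd _ q X' J (fun i => rename (f i) _ h)
  | @FOr _ _ _ J f => fun X' h => @FOr _ q X' J (fun i => rename (f i) _ h)
  | @FEx _ _ _ Y psi => fun X' h => @FEx _ q X' Y (rename psi _ (map_inl h))
  | @FAll _ _ _ Y psi => fun X' h => @FAll _ q X' Y (rename psi _ (map_inl h))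
  | @FQu _ _ _ Q phis =>
      fun X' h => @FQu _ q X' Q (fun j => rename (phis j) _ (map_inl h))
  end.
Arguments rename {X} phi {X'} h.

Lemma ext_map_inl {X X' Y : Type} (h : X -> X') (e : X' -> Omega)
    (e' : X -> Omega) (c : Y -> Omega) :
  (forall x, e (h x) = e' x) ->
  forall z, ext e c (map_inl h z) = ext e' c z.
Proof. intros He [x|y]; simpl; auto. Qed.

Lemma qu_int_ext (Q : qu_idx q)
    (F G : forall j : fin (qu_l q Q), (fin (qu_k q Q j) -> Omega) -> Prop) :
  (forall j t, F j t <-> G j t) -> (qu_int q Q F <-> qu_int q Q G).
Proof.
  intros HFG.
  replace F with G; [tauto|].
  apply functional_extensionality_dep; intro j.
  apply functional_extensionality; intro t.
  apply propositional_extensionality; symmetry; apply HFG.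
Qed.

Lemma sat_rename {X} (phi : formula q X) : forall X' (h : X -> X') e e',
  (forall x, e (h x) = e' x) -> (sat (rename phi h) e <-> sat phi e').
Proof.
  induction phi; intros X' h e e' He; simpl.
  - replace (fun j => e (h (x j))) with (fun j => e' (x j)); [tauto|].
    apply functional_extensionality; intro j; now rewrite He.
  - rewrite (IHphi X' h e e' He); tauto.
  - split; intros Hall i; apply (H i X' h e e' He); auto.
  - split; intros [i Hi]; exists i; apply (H i X' h e e' He); auto.
  - split; intros [c Hc]; exists c;
      apply (IHphi _ _ _ _ (ext_map_inl h e e' c He)); auto.
  - split; intros Hc c;
      apply (IHphi _ _ _ _ (ext_map_inl h e e' c He)); auto.
  - apply qu_int_ext; intros j t.
    apply (H j _ _ _ _ (ext_map_inl h e e' t He)).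
Qed.

Lemma free_rename {X} (phi : formula q X) : forall X' (h : X -> X') v,
  free phi v -> free (rename phi h) (h v).
Proof.
  induction phi; intros X' h v Hv; simpl in *.
  - destruct Hv as [j Hj]; exists j; now rewrite Hj.
  - auto.
  - destruct Hv as [i Hi]; exists i; auto.
  - destruct Hv as [i Hi]; exists i; auto.
  - apply (IHphi _ (map_inl h) (inl v)); auto.
  - apply (IHphi _ (map_inl h) (inl v)); auto.
  - destruct Hv as [j Hj]; exists j; apply (H j _ (map_inl h) (inl v)); auto.
Qed.

Lemma ext_agree {X Y : Type} (P : X + Y -> Prop) (e1 e2 : X -> Omega)
    (c : Y -> Omega) :
  (forall x, P (inl x) -> e1 x = e2 x) ->
  forall z, P z -> ext e1 c z = ext e2 c z.
Proof. intros He [x|y] Hz; simpl; auto. Qed.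

Lemma coincide {X} (phi : formula q X) : forall e1 e2,
  (forall x, free phi x -> e1 x = e2 x) -> (sat phi e1 <-> sat phi e2).
Proof.
  induction phi; intros e1 e2 He; simpl in *.
  - replace (fun j => e1 (x j)) with (fun j => e2 (x j)); [tauto|].
    apply functional_extensionality; intro j; symmetry; apply He; eauto.
  - rewrite (IHphi e1 e2 He); tauto.
  - split; intros Hall i; apply (H i e1 e2); eauto.
  - split; intros [i Hi]; exists i; apply (H i e1 e2); eauto.
  - split; intros [c Hc]; exists c;
      apply (IHphi (ext e1 c) (ext e2 c)); auto; apply ext_agree; auto.
  - split; intros Hc c;
      apply (IHphi (ext e1 c) (ext e2 c)); auto; apply ext_agree; auto.
  - apply qu_int_ext; intros j t.
    apply (H j (ext e1 t) (ext e2 t)), ext_agree; eauto.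
Qed.

(* The biconditional  A <-> B  as  (~A \/ B) /\ (~B \/ A). *)
Definition fiff {X} (A B : formula q X) : formula q X :=
  @FAnd _ q X bool (fun b =>
    if b then @FOr _ q X bool (fun c => if c then FNot A else B)
    else @FOr _ q X bool (fun c => if c then FNot B else A)).

Lemma sat_fiff {X} (A B : formula q X) e :
  sat (fiff A B) e <-> (sat A e <-> sat B e).
Proof.
  simpl; split.
  - intros H; destruct (H true) as [[|] H1]; destruct (H false) as [[|] H2];
      simpl in *; tauto.
  - intros H [|]; destruct (classic (sat A e)).
    + exists false; simpl; tauto.
    + exists true; simpl; auto.
    + exists false; simpl; tauto.
    + exists true; simpl; tauto.
Qed.

Lemma free_fiff_l {X} (A B : formula q X) x : free A x -> free (fiff A B) x.
Proof. intro Hx; exists true, true; exact Hx. Qed.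

Lemma free_fiff_r {X} (A B : formula q X) x : free B x -> free (fiff A B) x.
Proof. intro Hx; exists true, false; exact Hx. Qed.

Definition indisc {X Y : Type} (phi : formula q (X + Y)) : formula q (X + X) :=
  @FAll _ q (X + X) Y
    (fiff (rename phi (map_inl inl)) (rename phi (map_inl inr))).

Lemma sat_indisc {X Y : Type} (phi : formula q (X + Y)) (e1 e2 : X -> Omega) :
  sat (indisc phi) (ext e1 e2) <->
  forall c : Y -> Omega, (sat phi (ext e1 c) <-> sat phi (ext e2 c)).
Proof.
  assert (Hcopy : forall (i : X -> X + X) e c, (forall x, ext e1 e2 (i x) = e x) ->
            sat (rename phi (map_inl i)) (ext (ext e1 e2) c) <-> sat phi (ext e c))
    by (intros i e c Hi; apply sat_rename; intros [x|y]; simpl; auto).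
  simpl; split; intros H c; specialize (H c);
    [apply sat_fiff in H | apply sat_fiff];
    rewrite !Hcopy in * by reflexivity; exact H.
Qed.

Lemma free_indisc {X Y : Type} (phi : formula q (X + Y)) (x : X) :
  free phi (inl x) ->
  free (indisc phi) (inl x) /\ free (indisc phi) (inr x).
Proof.
  intro Hx; split; simpl.
  - apply free_fiff_l, (free_rename phi _ (map_inl inl) (inl x) Hx).
  - apply free_fiff_r, (free_rename phi _ (map_inl inr) (inl x) Hx).
Qed.

End Syntax.

Theorem lemma11 (Omega : Type) (q : ops Omega) (a b : Omega) :
  simq q a b <->
  (forall (phi : formula q (unit + unit)),
     free phi (inl tt) -> free phi (inr tt) ->
     forall c : Omega,
       sat phi (ext (fun _ : unit => a) (fun _ : unit => c)) <->
       sat phi (ext (fun _ : unit => b) (fun _ : unit => c))).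
Proof.
  split.
  - intros Hsim phi _ _ c; exact (Hsim unit phi (fun _ => c)).
  - intros Htwo Y phi c.
    destruct (classic (free phi (inl tt))) as [Hfree | Hnotfree].
    + destruct (free_indisc phi tt Hfree) as [Hl Hr].
      assert (Hbb : sat (indisc phi) (ext (fun _ : unit => b) (fun _ => b)))
        by (apply sat_indisc; tauto).
      apply (Htwo _ Hl Hr b) in Hbb.
      exact (proj1 (sat_indisc phi (fun _ => a) (fun _ => b)) Hbb c).
    + apply coincide; intros [[]|y] Hy; simpl; [contradiction | reflexivity].
Qed.
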